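(* On a network graph with $N$ nodes and maximum node degree $v$, the algorithm FastInitTree described in the context runs in time $O(Nv\log v)$.
   Context: FastInitTree, input a graph $\mathcal{G}=(\mathcal{V}\cup\{S\},\xi)$ with sink $S$ and a deadline $D$: initialize a global set $\mathcal{V}_{\mathrm{done}}=\emptyset$ and call ExtendTree$(S,D)$, where ExtendTree$(P,d)$ does: add $P$ to $\mathcal{V}_{\mathrm{done}}$; let $c_1,\dots,c_k$ be the neighbors of $P$ not in $\mathcal{V}_{\mathrm{done}}$, sorted in descending order of power, where the power of a node is its number of neighbors not in $\mathcal{V}_{\mathrm{done}}$; for $i=1,\dots,\min\{k,d\}$: set $P$ as parent of $c_i$ and, if $d>0$, call ExtendTree$(c_i,d-i)$. Finally, each node not in $\mathcal{V}_{\mathrm{done}}$ is made a child of one of its neighbors in $\mathcal{V}_{\mathrm{done}}$ having the fewest children. The output is a spanning tree rooted at $S$. *)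

From mathcomp Require Import all_boot.
Set Implicit Arguments. Unset Strict Implicit. Unset Printing Implicit Defensive.

Section FastInitTree.
Variables (T : finType) (e : rel T).

Definition nbrs (P : T) : seq T := [seq y <- enum T | e P y].
Definition deg (P : T) : nat := size (nbrs P).
Definition maxdeg : nat := \max_(x : T) deg x.

Definition power (done : {set T}) (x : T) : nat :=
  count (fun y => y \notin done) (nbrs x).

(* cost charged for comparison-sorting k items (merge sort: at most
   k * ceil(log2 k) comparisons) *)
Definition sort_cost (k : nat) : nat := k * up_log 2 k.

(* algorithm state: V_done, parent map, elapsed elementary steps *)
Record st := St { done : {set T}; par : T -> option T; cost : nat }.

(* number of children of y in the current parent map (maintained as a
   counter in an implementation; read in O(1)) *)
Definition nchildren (p : T -> option T) (y : T) : nat :=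
  #|[pred z | p z == Some y]|.

(* ExtendTree(P, d); [fuel] only serves to make the recursion structural
   (d strictly decreases at each recursive call, so fuel d.+1 suffices).
   Costs: 1 for the call, deg P for adding P to V_done (updating the power
   counters of P's neighbours), deg P for scanning P's neighbours, the
   sorting cost, and 1 per loop iteration. *)
Fixpoint extend (fuel : nat) (P : T) (d : nat) (s : st) : st :=
  match fuel with
  | 0 => s
  | fuel'.+1 =>
    let dn := P |: done s in
    let cs := sort (fun x y => power dn y <= power dn x)
                   [seq c <- nbrs P | c \notin dn] in
    let c0 := cost s + 1 + deg P + deg P + sort_cost (size cs) in
    let fix loop (l : seq T) (i : nat) (s' : st) : st :=
      match l with
      | [::] => s'
      | c :: l' =>
        if d < i then s' else
        let s1 := St (done s') (par s') (cost s' + 1) in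
        if c \in done s1 then loop l' i.+1 s1
        else
          let s2 := St (done s1)
                       (fun x => if x == c then Some P else par s1 x)
                       (cost s1) in
          loop l' i.+1 (extend fuel' c (d - i) s2)
      end in
    loop cs 1 (St dn (par s) c0)
  end.

(* Cost: 1 per node, plus deg x + 1 for a
   node x not in V_done (scan of its neighbours, then the assignment). *)
Definition attach_one (dn : {set T}) (s : st) (x : T) : st :=
  if x \in dn then St (done s) (par s) (cost s + 1) else
  match [seq y <- nbrs x | y \in dn] with
  | [::] => St (done s) (par s) (cost s + 1 + deg x)
  | y0 :: ys =>
    let best := foldl (fun b y => if nchildren (par s) y < nchildren (par s) b
                                  then y else b) y0 ys in
    St (done s) (fun z => if z == x then Some best else par s z)
       (cost s + 1 + deg x + 1)
  end.

Definition attach (s : st) : st := foldl (attach_one (done s)) s (enum T).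

Definition fastInitTree (S : T) (D : nat) : st :=
  attach (extend D.+1 S D (St set0 (fun _ => None) 0)).

Definition fastInitTree_time (S : T) (D : nat) : nat :=
  cost (fastInitTree S D).

End FastInitTree.

(* Every call ExtendTree(P, d) is made on a node P outside V_done and puts it
   there, so there are at most #|T| calls.  Apart from its recursive calls, a
   call costs O(v log v): two scans of the neighbours of P, sorting at most v
   of them, and at most v loop iterations.  Hence cost + B * #|T \ V_done| is
   nonincreasing along ExtendTree for B = O(v log v).  The final attachment
   phase costs O(v) per node. *)
From mathcomp Require Import all_boot zify.

Section Cost.
Variables (T : finType) (e : rel T).

Local Notation v := (maxdeg e).

Lemma deg_le_maxdeg x : deg e x <= v.
Proof. exact: (@leq_bigmax T (deg e) x). Qed.

Lemma size_sorted_unvisited_nbrs (P : T) (dn : {set T}) (r : rel T) :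
  size (sort r [seq c <- nbrs e P | c \notin dn]) <= v.
Proof.
by rewrite size_sort size_filter (leq_trans (count_size _ _)) ?deg_le_maxdeg.
Qed.

Definition call_budget : nat := 1 + 3 * v + v * up_log 2 v.

Definition potential (s : st T) : nat := cost s + call_budget * #|~: done s|.

Lemma extend_potential fuel P d s : P \notin done s ->
  potential (extend e fuel P d s) <= potential s.
Proof.
rewrite /potential.
elim: fuel P d s => [|fuel IH] P d s P_new //=.
set cs := sort _ _; set s0 := St _ _ _.
match goal with |- context [?L cs 1 s0] => set loop := L end.
have loop_potential l i s' :
  cost (loop l i s') + call_budget * #|~: done (loop l i s')|
    <= cost s' + size l + call_budget * #|~: done s'|.
  elim: l i s' => [|c l IHl] i s' /=; first by rewrite addn0.
  case: (d < i); first lia.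
  case: ifP => c_done; apply: leq_trans (IHl _ _) _ => /=; first lia.
  have := IH c (d - i) (St (done s')
    (fun x => if x == c then Some P else par s' x) (cost s' + 1)) (negbT c_done).
  rewrite /=; lia.
apply: leq_trans (loop_potential cs 1 s0) _; rewrite /s0 /=.
have card_done : #|~: done s| = #|~: (P |: done s)|.+1.
  by move: (cardsC (P |: done s)) (cardsC (done s)); rewrite cardsU1 P_new; lia.
have size_cs : size cs <= v := size_sorted_unvisited_nbrs _ _ _.
have sort_cost_cs : sort_cost (size cs) <= v * up_log 2 v.
  by rewrite /sort_cost leq_mul ?leq_up_log.
have := deg_le_maxdeg P.
rewrite card_done mulnS /call_budget; move: sort_cost_cs; move: (v * _) => vlogv; lia.
Qed.

Lemma attach_cost dn l s :
  cost (foldl (attach_one e dn) s l) <= cost s + size l * v.+2.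
Proof.
elim: l s => [|x l IHl] s /=; first by rewrite addn0.
apply: leq_trans (IHl _) _.
have := deg_le_maxdeg x.
rewrite /attach_one; case: ifP => _ /=; first lia.
by case: [seq y <- nbrs e x | y \in dn] => [|y0 ys] /=; lia.
Qed.

Lemma fastInitTree_time_le S D :
  fastInitTree_time e S D <= #|T| * (call_budget + v.+2).
Proof.
rewrite /fastInitTree_time /fastInitTree /attach.
set s := extend _ _ _ _ _.
apply: leq_trans (attach_cost _ _ _) _.
have := extend_potential D.+1 S D (St set0 (fun _ => None) 0) (negbT (in_set0 S)).
rewrite -/s /potential /= setC0 cardsT -cardT.
move=> potential_le; rewrite mulnDr leq_add2r mulnC.
apply: leq_trans potential_le; exact: leq_addr.
Qed.

End Cost.

Theorem theorem5 :
  exists C : nat,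
    forall (T : finType) (e : rel T) (S : T) (D : nat),
      symmetric e -> irreflexive e ->
      fastInitTree_time e S D
        <= C * #|T| * (maxdeg e).+1 * (up_log 2 (maxdeg e)).+1.
Proof.
exists 7 => T e S D _ _.
apply: leq_trans (fastInitTree_time_le _ e S D) _.
rewrite /call_budget; move: (maxdeg e) (up_log 2 _) #|T| => v u n; nia.
Qed.
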